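(* Let $t\in[n]$ and let $S\subseteq N$ be a maximal $t$-switchable set in which all elements are pairwise connected in $S$. Then $S=N$.
   Context: Fix positive integers $n, r_1,\dots,r_n$, let $N=[r_1]\times\cdots\times[r_n]$, and let $R$ be the polynomial ring over a field in the variables $x_a$, $a\in N$. For $a,b\in N$ and $i\in[n]$, ${\rm s}(i,a,b)\in N$ has $i$-th component $b_i$ and other components equal to those of $a$. Let $d(a,b)=\#\{j: a_j\neq b_j\}$ and $f_{i,a,b}=x_ax_b-x_{{\rm s}(i,a,b)}x_{{\rm s}(i,b,a)}$. A subset $S\subseteq N$ is $t$-switchable if for all $a,b\in S$ with $d(a,b)=2$ and all $i\in[t]$, ${\rm s}(i,a,b)\in S$. Elements $a,b\in S$ are connected in $S$ if there are $a_0=a,\dots,a_k=b$ in $S$ with $d(a_{j-1},a_j)\le 1$ for all $j$. For $t$-switchable $S$: $\tilde{\mathcal{I}}^{\langle t\rangle}_S=(f_{i,a,b}: i\in[t],\ a,b \text{ connected in } S)$, $\mathrm{Var}^{\langle t\rangle}_S=(x_a: a\notin S)$, $P^{\langle t\rangle}_S=\mathrm{Var}^{\langle t\rangle}_S+\tilde{\mathcal{I}}^{\langle t\rangle}_S$. A $t$-switchable $S$ is maximal $t$-switchable if for every $t$-switchable $T$ properly containing $S$, $P^{\langle t\rangle}_S$ and $P^{\langle t\rangle}_T$ are incomparable under inclusion. *)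

From HB Require Import structures.
From mathcomp Require Import all_boot all_order all_algebra.
From mathcomp Require Import mpoly.
Set Implicit Arguments. Unset Strict Implicit. Unset Printing Implicit Defensive.
Import GRing.Theory.
Local Open Scope ring_scope.

(* N = [r_1] x ... x [r_n]; coordinate i (0-based, i : 'I_n) ranges over 'I_(r i).
   Paper index i in [n] corresponds to the ordinal i-1. *)
Definition Nset (n : nat) (r : 'I_n -> nat) : finType :=
  {dffun forall i : 'I_n, 'I_(r i)}.

Section Defs.
Variables (F : fieldType) (n : nat) (r : 'I_n -> nat).
Local Notation N := (Nset r).

Definition sw (i : 'I_n) (a b : N) : N :=
  [ffun j => if j == i then b j else a j].

Definition dist (a b : N) : nat := #|[set j | a j != b j]|.

Definition PR := {mpoly F[#|N|]}.
Definition xv (a : N) : PR := 'X_(enum_rank a).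

Definition fpol (i : 'I_n) (a b : N) : PR :=
  xv a * xv b - xv (sw i a b) * xv (sw i b a).

(* t-switchable ; paper's i in [t] = ordinals i with i < t *)
Definition switchable (t : nat) (S : {set N}) : Prop :=
  forall a b : N, a \in S -> b \in S -> dist a b = 2 ->
    forall i : 'I_n, (i < t)%N -> sw i a b \in S.

Definition connected_in (S : {set N}) (a b : N) : Prop :=
  exists p : seq N, [/\ all (fun c => c \in S) (a :: p),
                        path (fun c d => (dist c d <= 1)%N) a p & last a p = b].

Definition ideal_gen (G : PR -> Prop) (p : PR) : Prop :=
  exists s : seq (PR * PR), (forall q, q \in s -> G q.2) /\
                            p = \sum_(q <- s) q.1 * q.2.

Definition P_gens (t : nat) (S : {set N}) (p : PR) : Prop :=
  (exists a, a \notin S /\ p = xv a) \/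
  (exists (i : 'I_n) (a b : N), [/\ (i < t)%N, connected_in S a b & p = fpol i a b]).

Definition Pideal (t : nat) (S : {set N}) : PR -> Prop := ideal_gen (P_gens t S).

Definition ideal_incl (I J : PR -> Prop) : Prop := forall p, I p -> J p.

Definition maximal_switchable (t : nat) (S : {set N}) : Prop :=
  switchable t S /\
  forall T : {set N}, switchable t T -> S \proper T ->
    ~ ideal_incl (Pideal t S) (Pideal t T) /\ ~ ideal_incl (Pideal t T) (Pideal t S).

End Defs.

(* If S were not all of N, then N itself would be a t-switchable set properly
   containing S, and P_N is contained in P_S: a binomial f_{i,a,b} is a
   generator of P_S when a, b lie in S (they are connected by hypothesis), is
   minus such a generator when s(i,a,b), s(i,b,a) lie in S, and otherwise each
   of its two monomials is divisible by some x_c with c outside S.  This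
   comparability contradicts maximality. *)
From HB Require Import structures.
From mathcomp Require Import all_boot all_order all_algebra.
From mathcomp Require Import mpoly.
Import GRing.Theory.
Local Open Scope ring_scope.

Section IdealGen.
Variables (F : fieldType) (n : nat) (r : 'I_n -> nat).
Implicit Types (G H : PR F r -> Prop) (p q : PR F r).

Lemma ideal_gen0 G : ideal_gen G 0.
Proof. by exists [::]; rewrite big_nil. Qed.

Lemma ideal_genD G p q : ideal_gen G p -> ideal_gen G q -> ideal_gen G (p + q).
Proof.
move=> [s1 [G1 ->]] [s2 [G2 ->]]; exists (s1 ++ s2); rewrite big_cat; split=> //.
by move=> x; rewrite mem_cat => /orP[/G1|/G2].
Qed.

Lemma ideal_genMl G c p : ideal_gen G p -> ideal_gen G (c * p).
Proof.
move=> [s [Gs ->]]; exists [seq (c * x.1, x.2) | x <- s]; split.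
  by move=> y /mapP[x sx ->] /=; apply: Gs.
by rewrite big_map mulr_sumr; apply: eq_bigr => x _; rewrite mulrA.
Qed.

Lemma ideal_gen_mem G c g : G g -> ideal_gen G (c * g).
Proof.
by move=> Gg; exists [:: (c, g)]; rewrite big_seq1; split=> // x; rewrite inE => /eqP->.
Qed.

Lemma ideal_gen_sub G H :
  (forall g, G g -> ideal_gen H g) -> ideal_incl (ideal_gen G) (ideal_gen H).
Proof.
move=> GH _ [s [Gs ->]]; elim: s Gs => [|x s IHs] Gs.
  by rewrite big_nil; apply: ideal_gen0.
rewrite big_cons; apply: ideal_genD; first by apply/ideal_genMl/GH/Gs/mem_head.
by apply: IHs => y sy; apply: Gs; rewrite inE sy orbT.
Qed.

End IdealGen.

Section Binomials.
Variables (F : fieldType) (n : nat) (r : 'I_n -> nat).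
Implicit Types (a b : Nset r) (S : {set Nset r}).

Lemma sw_swl (i : 'I_n) a b : sw i (sw i a b) (sw i b a) = a.
Proof. by apply/ffunP => j; rewrite !ffunE; case: (j == i). Qed.

Lemma sw_swr (i : 'I_n) a b : sw i (sw i b a) (sw i a b) = b.
Proof. by apply/ffunP => j; rewrite !ffunE; case: (j == i). Qed.

Lemma fpol_sw (i : 'I_n) a b :
  fpol F i (sw i a b) (sw i b a) = - fpol F i a b.
Proof. by rewrite /fpol sw_swl sw_swr opprB. Qed.

Lemma switchableT (t : nat) : switchable t [set: Nset r].
Proof. by move=> *; rewrite in_setT. Qed.

Lemma Pideal_xv (t : nat) S c p : c \notin S -> Pideal (F:=F) t S (p * xv F c).
Proof. by move=> cNS; apply: ideal_gen_mem; left; exists c. Qed.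

Lemma Pideal_fpol (t : nat) S (i : 'I_n) a b :
  (i < t)%N -> (forall a b, a \in S -> b \in S -> connected_in S a b) ->
  Pideal (F:=F) t S (fpol F i a b).
Proof.
move=> it Sconn; have gen u v : u \in S -> v \in S -> P_gens (F:=F) t S (fpol F i u v).
  by move=> uS vS; right; exists i, u, v; split=> //; apply: Sconn.
have [/andP[aS bS] | NaSbS] := boolP ((a \in S) && (b \in S)).
  by rewrite -[fpol _ _ _ _]mul1r; apply/ideal_gen_mem/gen.
have [/andP[cS dS] | NcSdS] := boolP ((sw i a b \in S) && (sw i b a \in S)).
  by rewrite -[fpol _ _ _ _]opprK -fpol_sw -mulN1r; apply/ideal_gen_mem/gen.
apply: ideal_genD.
  by case/nandP: NaSbS => [aNS | bNS]; [rewrite mulrC|]; exact: Pideal_xv.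
by case/nandP: NcSdS => [cNS | dNS]; [rewrite -mulrN mulrC | rewrite -mulNr];
  exact: Pideal_xv.
Qed.

End Binomials.

Theorem proposition4p8 (F : fieldType) (n : nat) (r : 'I_n -> nat)
  (r_pos : forall i, (0 < r i)%N) (t : nat) (ht : (1 <= t <= n)%N)
  (S : {set Nset r}) :
  maximal_switchable F t S ->
  (forall a b, a \in S -> b \in S -> connected_in S a b) ->
  S = setT.
Proof.
move=> [_ Smax] Sconn; apply/eqP; apply: contraT; rewrite -properT => SproperT.
have [_ []] := Smax _ (switchableT _ _ t) SproperT.
apply: ideal_gen_sub => g [[c [cNT _]] | [i [a [b [it _ ->]]]]].
  by rewrite in_setT in cNT.
exact: Pideal_fpol.
Qed.
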